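(* Let $G$ be a finite induced regular group of odd order. If $C_G(x)\neq \beta_G(x)\cup Z(G)$ for all $x\in G$, then $G/Z(G)$ is an elementary $p$-group for some prime $p$.
   Context: For a finite group $G$, $C_G(x)$ denotes the centralizer of $x\in G$ and $Z(G)$ the center; $\beta_G(x)=\{y\in G\mid C_G(y)=C_G(x)\}$. The non-centralizer graph $\Upsilon_G$ is the simple graph with vertex set $G$ in which two distinct vertices $x,y$ are adjacent iff $C_G(x)\neq C_G(y)$; the induced non-centralizer graph $\Upsilon_{G\setminus Z(G)}$ is its induced subgraph on $G\setminus Z(G)$. $G$ is called induced regular if $\Upsilon_{G\setminus Z(G)}$ is a regular graph. A group is called an elementary $p$-group if every non-identity element has order exactly $p$ (it need not be abelian). *)

From mathcomp Require Import all_boot all_order all_fingroup all_solvable.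
Set Implicit Arguments. Unset Strict Implicit. Unset Printing Implicit Defensive.
Local Open Scope group_scope.

Section Defs.
Variable gT : finGroupType.

Definition beta_set (G : {group gT}) (x : gT) : {set gT} :=
  [set y in G | 'C_G[y] == 'C_G[x]].

Definition nc_adj (G : {group gT}) (x y : gT) : bool :=
  (x != y) && ('C_G[x] != 'C_G[y]).

Definition induced_regular (G : {group gT}) : Prop :=
  exists k : nat, forall x, x \in G :\: 'Z(G) ->
    #|[set y in G :\: 'Z(G) | nc_adj G x y]| = k.

End Defs.

Definition elementary_pgroup (rT : finGroupType) (p : nat) (H : {set rT}) : Prop :=
  forall q, q \in H -> q != 1 -> #[q] = p.

(* Call a noncentral x maximal if C_G(x) is maximal among the centralizers of
   noncentral elements. For such x, Z(C_G(x)) is the disjoint union of Z(G) and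
   beta_G(x); induced regularity makes |beta_G| a constant b on G \ Z(G), so all
   these groups have the same index (|Z(G)| + b) / |Z(G)| over Z(G); let p be a
   prime divisor of it. By Cauchy some a in Z(C_G(x)) \ Z(G) has a^p central.
   The hypothesis C_G(x) <> beta_G(x) u Z(G) provides a second maximal
   w in C_G(x) with C_G(w) <> C_G(x). If T, the set of c in Z(C_G(w)) with c^p
   not central, were nonempty, then for c0 in T the translates aT and a^-1 T
   would be disjoint (a^2 is noncentral as |G| is odd) subsets of
   beta_G(a c0), forcing |Z(G)| + b = |Z(C_G(w))| <= 2|T| <= b. So p-th powers
   of Z(C_G(w)) are central, and symmetrically those of Z(C_G(x)). Finally, if
   g^p were noncentral, with w maximal above g^p the translates g Z(C_G(w))
   would all lie in beta_G(g), again too many. *)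

From mathcomp Require Import all_boot all_order all_fingroup all_solvable.
Set Implicit Arguments. Unset Strict Implicit. Unset Printing Implicit Defensive.
Local Open Scope group_scope.

Section SubCentralizers.
Variables (gT : finGroupType) (G : {group gT}).
Implicit Types (K : {set gT}) (a c g h x y z : gT).

Lemma sub_subcent1 K y : (K \subset 'C_G[y]) = (K \subset G) && (y \in 'C(K)).
Proof. by rewrite subsetI sub_cent1. Qed.

Lemma subcent1_subE x y : ('C_G[x] \subset 'C_G[y]) = (y \in 'C('C_G[x])).
Proof. by rewrite sub_subcent1 subsetIl. Qed.

Lemma subcent1X x k : 'C_G[x] \subset 'C_G[x ^+ k].
Proof. by rewrite subcent1_subE groupX // -subcent1_subE. Qed.

Lemma subcent1_subM K g h :
  K \subset 'C_G[g] -> K \subset 'C_G[h] -> K \subset 'C_G[g * h].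
Proof. by rewrite !sub_subcent1 => /andP[-> gC] /andP[_ hC]; rewrite groupM. Qed.

Lemma subcent1_subMl K g h :
  K \subset 'C_G[g * h] -> K \subset 'C_G[h] -> K \subset 'C_G[g].
Proof.
by rewrite !sub_subcent1 => /andP[-> ghC] /andP[_ hC]; rewrite -(groupMr g hC).
Qed.

Lemma subcent1_mul_eq y c : 'C_G[y] \subset 'C_G[c] ->
  'C_G[y * c] \subset 'C_G[c] -> 'C_G[y * c] = 'C_G[y].
Proof.
move=> Cyc Cycc; apply/eqP.
by rewrite eqEsubset (subcent1_subMl (subxx _) Cycc) (subcent1_subM (subxx _) Cyc).
Qed.

Lemma subcent1_center z : z \in 'Z(G) -> 'C_G[z] = G.
Proof. by case/setIP=> _; rewrite -sub_cent1 => /setIidPl. Qed.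

Lemma subcent1_mulZ g z : z \in 'Z(G) -> 'C_G[g * z] = 'C_G[g].
Proof. by move=> zZ; apply: subcent1_mul_eq; rewrite (subcent1_center zZ) subsetIl. Qed.

Lemma subcent1_eqG x : x \in G -> ('C_G[x] == G) = (x \in 'Z(G)).
Proof.
by move=> xG; rewrite eqEsubset subsetIl subsetI subxx sub_cent1 /center inE xG.
Qed.

Lemma mem_center_subcent1 x a : x \in G ->
  (a \in 'Z('C_G[x])) = (a \in G) && ('C_G[x] \subset 'C_G[a]).
Proof.
move=> xG; rewrite subcent1_subE /center inE.
apply/andP/andP=> [[/setIP[aG _] aC] | [aG aC]]; split=> //.
by rewrite inE aG; apply/cent1P/(centP aC)/subcent1_id.
Qed.

Lemma center_subcent1_sub x : 'Z('C_G[x]) \subset G.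
Proof. exact: subset_trans (center_sub _) (subsetIl _ _). Qed.

Lemma sub_subcent1_center x a : x \in G ->
  a \in 'Z('C_G[x]) -> 'C_G[x] \subset 'C_G[a].
Proof. by move=> xG; rewrite mem_center_subcent1 // => /andP[]. Qed.

Lemma center_sub_center_subcent1 x : x \in G -> 'Z(G) \subset 'Z('C_G[x]).
Proof.
move=> xG; apply/subsetP=> z zZ.
rewrite mem_center_subcent1 // (subcent1_center zZ) subsetIl andbT.
exact: subsetP (center_sub G) z zZ.
Qed.

End SubCentralizers.

Lemma odd_order_sqr_mem (gT : finGroupType) (H : {group gT}) g :
  odd #[g] -> (g ^+ 2 \in H) = (g \in H).
Proof.
move=> odd_g; apply/idP/idP=> [g2H|]; last exact: groupX.
have: generator <[g]> (g ^+ 2) by rewrite generator_coprime coprimen2.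
by move/eqP=> gen; rewrite -cycle_subG gen cycle_subG.
Qed.

Lemma card_expn_mem_le (gT : finGroupType) (A H : {group gT}) k c0 :
    abelian A -> c0 \in A -> c0 ^+ k \notin H ->
  #|A :&: [set c | c ^+ k \in H]| <= #|A :\: [set c | c ^+ k \in H]|.
Proof.
move=> abA c0A c0kH; rewrite -(card_lcoset _ c0); apply/subset_leq_card/subsetP=> u.
case/lcosetP=> o /setIP[oA]; rewrite in_set => okH ->.
have c0o : commute c0 o := centsP abA c0 c0A o oA.
by rewrite in_setD in_set groupM // andbT (expgMn _ c0o) groupMr.
Qed.

Lemma Cauchy_index (gT : finGroupType) (H K : {group gT}) p :
    K \subset 'N(H) -> prime p -> p %| #|K : H| ->
  exists2 a, a \in K :\: H & a ^+ p \in H.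
Proof.
move=> nHK p_pr; rewrite -card_quotient // => /(Cauchy p_pr)[q].
case/morphimP=> a aN aK -> oq; exists a.
  rewrite in_setD aK andbT; apply: contraL p_pr => aH.
  by rewrite -oq /= coset_id // order1.
by apply: coset_idr; rewrite ?groupX // morphX // -oq expg_order.
Qed.

Lemma elementary_pgroup_quotient (gT : finGroupType) (G H : {group gT}) p :
  prime p -> {in G, forall g, g ^+ p \in H} -> elementary_pgroup p (G / H).
Proof.
move=> p_pr Gp _ /morphimP[g gN gG ->] Hg_neq1.
have: #[coset_morphism H g] %| p by rewrite order_dvdn -morphX // /= coset_id ?Gp.
by case/primeP: p_pr => _ /[apply] /orP[|/eqP //]; rewrite order_eq1 (negPf Hg_neq1).
Qed.

Section MaximalCentralizers.
Variables (gT : finGroupType) (G : {group gT}).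
Implicit Types (S : {set gT}) (a c v w x y : gT).

Lemma beta_setD x : x \in G :\: 'Z(G) -> beta_set G x \subset G :\: 'Z(G).
Proof.
case/setDP=> xG xZ; apply/subsetP=> y /setIdP[yG /eqP Cyx].
by rewrite inE yG andbT -subcent1_eqG // Cyx subcent1_eqG.
Qed.

Lemma beta_set_non_adj x : x \in G :\: 'Z(G) ->
  beta_set G x = (G :\: 'Z(G)) :\: [set y | nc_adj G x y].
Proof.
move=> xGZ; apply/setP=> y; rewrite in_setD in_set /nc_adj negb_and !negbK.
apply/idP/andP=> [yb | [/orP[/eqP<- | /eqP Cxy] /setDP[yG _]]].
- split; last exact: subsetP (beta_setD xGZ) y yb.
  by case/setIdP: yb => _ /eqP ->; rewrite eqxx orbT.
- by rewrite inE (setDP xGZ).1 eqxx.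
- by rewrite inE yG Cxy eqxx.
Qed.

Lemma induced_regular_card_beta : induced_regular G ->
  exists b, {in G :\: 'Z(G), forall x, #|beta_set G x| = b}.
Proof.
case=> k adj_k; exists (#|G :\: 'Z(G)| - k)%N => x xGZ.
rewrite -(adj_k x xGZ) setIdE beta_set_non_adj //.
by rewrite -[#|G :\: 'Z(G)|](cardsID [set y | nc_adj G x y]) addKn.
Qed.

Definition cent_maximal x : Prop :=
  x \in G :\: 'Z(G) /\
  {in G :\: 'Z(G), forall v, 'C_G[x] \subset 'C_G[v] -> 'C_G[v] = 'C_G[x]}.

Lemma exists_cent_maximal v : v \in G :\: 'Z(G) ->
  exists2 w, cent_maximal w & 'C_G[v] \subset 'C_G[w].
Proof.
move=> vGZ; pose P u := (u \in G :\: 'Z(G)) && ('C_G[v] \subset 'C_G[u]).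
have Pv : P v by rewrite /P vGZ subxx.
case: (arg_maxnP (fun u => #|'C_G[u]|) Pv) => w /andP[wGZ Cvw] w_max.
exists w => //; split=> // u uGZ Cwu; apply/eqP; rewrite eq_sym eqEcard Cwu.
by apply: w_max; rewrite /P uGZ (subset_trans Cvw Cwu).
Qed.

Lemma subcent1_cent_maximal x a : cent_maximal x ->
  a \in 'Z('C_G[x]) :\: 'Z(G) -> 'C_G[a] = 'C_G[x].
Proof.
case=> /setDP[xG _] x_max /setDP[aCx aZ].
by move: aCx; rewrite mem_center_subcent1 // => /andP[aG]; apply: x_max; rewrite inE aZ.
Qed.

Lemma center_cent_maximal x : cent_maximal x ->
  'Z('C_G[x]) = 'Z(G) :|: beta_set G x.
Proof.
move=> x_max; have /setDP[xG _] := x_max.1; apply/setP=> a; rewrite in_setU.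
have [aZ | aZ] /= := boolP (a \in 'Z(G)).
  by rewrite (subsetP (center_sub_center_subcent1 xG)).
apply/idP/setIdP => [aA | [aG /eqP Cax]].
  split; first by move: aA; rewrite mem_center_subcent1 // => /andP[].
  by rewrite (subcent1_cent_maximal x_max) // inE aZ.
by rewrite mem_center_subcent1 // aG Cax subxx.
Qed.

Lemma card_center_cent_maximal x : cent_maximal x ->
  #|'Z('C_G[x])| = (#|'Z(G)| + #|beta_set G x|)%N.
Proof.
move=> x_max; rewrite center_cent_maximal // cardsU.
suff -> : 'Z(G) :&: beta_set G x = set0 by rewrite cards0 subn0.
apply/setP=> y; rewrite inE in_set0; apply/andP=> [[yZ /(subsetP (beta_setD x_max.1))]].
by rewrite inE yZ.
Qed.

Lemma card_le_beta y S : y \in G -> S \subset G ->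
  {in S, forall s, 'C_G[y * s] = 'C_G[y]} -> #|S| <= #|beta_set G y|.
Proof.
move=> yG sSG Cys; rewrite -(card_lcoset S y); apply/subset_leq_card/subsetP=> u.
by case/lcosetP=> s sS ->; rewrite inE Cys // eqxx andbT groupM // (subsetP sSG).
Qed.

Lemma index_center_cent_maximal_gt1 x : cent_maximal x ->
  1 < #|'Z('C_G[x]) : 'Z(G)|.
Proof.
case=> /setDP[xG xZ] _; rewrite indexg_gt1; apply/subsetPn; exists x => //.
by rewrite mem_center_subcent1 // xG subxx.
Qed.

Lemma subcent1_mul_centers x w a c k :
    cent_maximal x -> cent_maximal w -> w \in 'C_G[x] ->
    a \in 'Z('C_G[x]) :\: 'Z(G) -> a ^+ k \in 'Z(G) ->
    c \in 'Z('C_G[w]) -> c ^+ k \notin 'Z(G) ->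
  'C_G[a * c] = 'C_G[x] :&: 'C_G[w].
Proof.
move=> x_max w_max wCx aA akZ cA ckZ.
have /setDP[xG _] := x_max.1; have /setDP[wG _] := w_max.1.
have /setDP[/(subsetP (center_subcent1_sub G x)) aG _] := aA.
have cG := subsetP (center_subcent1_sub G w) c cA.
have Cwc := sub_subcent1_center wG cA.
have Cxa : 'C_G[a] = 'C_G[x] := subcent1_cent_maximal x_max aA.
have Cck : 'C_G[c ^+ k] = 'C_G[w].
  by apply: subcent1_cent_maximal; rewrite // inE ckZ groupX.
have ac : commute a c.
  have cCx : c \in 'C_G[x] := subcent1C cG (subsetP Cwc x (subcent1C xG wCx)).
  exact/esym/(centerC cCx)/(setDP aA).1.
have Cac_w : 'C_G[a * c] \subset 'C_G[w].
  rewrite -Cck; apply: subset_trans (subcent1X G _ k) _.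
  by rewrite ac (expgMn _ (esym ac)) subcent1_mulZ.
apply/eqP; rewrite eqEsubset subsetI Cac_w andbT -{1}Cxa.
rewrite (subcent1_subMl (subxx _) (subset_trans Cac_w Cwc)) /=.
apply: subcent1_subM; first by rewrite Cxa subsetIl.
exact: subset_trans (subsetIr _ _) Cwc.
Qed.

Section UniformBeta.
Variable b : nat.
Hypothesis card_beta : {in G :\: 'Z(G), forall x, #|beta_set G x| = b}.

Lemma index_center_cent_maximal x : cent_maximal x ->
  #|'Z('C_G[x]) : 'Z(G)| = ((#|'Z(G)| + b) %/ #|'Z(G)|)%N.
Proof.
move=> x_max; have xGZ := x_max.1; have /setDP[xG _] := xGZ.
by rewrite -divgS ?center_sub_center_subcent1 // card_center_cent_maximal // card_beta.
Qed.

Lemma cent_maximal_center_moves w y : cent_maximal w -> y \in G :\: 'Z(G) ->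
  exists2 c, c \in 'Z('C_G[w]) & 'C_G[y * c] != 'C_G[y].
Proof.
move=> w_max yGZ; have wGZ := w_max.1; have /setDP[yG _] := yGZ.
have : ~~ (#|'Z('C_G[w])| <= #|beta_set G y|).
  by rewrite card_center_cent_maximal // !card_beta // -ltnNge -subn_gt0 addnK.
move=> card_lt; apply/exists_inP; apply: contraNT card_lt => /exists_inPn Cyc.
apply: card_le_beta => //; first exact: center_subcent1_sub.
by move=> c /Cyc /negPn /eqP.
Qed.

Lemma subcent1_sub_beta_center x : cent_maximal x ->
    {in 'C_G[x] :\: 'Z(G), forall v, 'C_G[v] \subset 'C_G[x]} ->
  'C_G[x] \subset beta_set G x :|: 'Z(G).
Proof.
move=> x_max Cv_sub; have /setDP[xG _] := x_max.1; apply/subsetP=> y yCx.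
have yG := subsetP (subsetIl _ _) y yCx.
rewrite in_setU orbC; have [//|yZ] /= := boolP (y \in 'Z(G)).
have Cyx : 'C_G[y] \subset 'C_G[x] by apply: Cv_sub; rewrite inE yZ.
rewrite inE yG eqEsubset Cyx /=; apply/negPn/negP => Cxy.
have [|c cA] := cent_maximal_center_moves x_max (_ : y \in G :\: 'Z(G)).
  by rewrite inE yZ.
apply/negP; rewrite negbK.
have Cxc := sub_subcent1_center xG cA.
have ycZ : y * c \notin 'Z(G).
  apply: contra Cxy => ycZ; apply: (subcent1_subMl _ Cxc).
  by rewrite (subcent1_center ycZ) subsetIl.
have Cycx : 'C_G[y * c] \subset 'C_G[x].
  by apply: Cv_sub; rewrite inE ycZ groupM // (subsetP (center_sub _)).
by apply/eqP/subcent1_mul_eq; apply: subset_trans Cxc.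
Qed.

Lemma cent_maximal_partner x : cent_maximal x ->
    'C_G[x] != beta_set G x :|: 'Z(G) ->
  exists w, [/\ cent_maximal w, w \in 'C_G[x] & 'C_G[w] != 'C_G[x]].
Proof.
move=> x_max Cx_neq; have /setDP[xG _] := x_max.1.
have [v /setDP[vC vZ] Cvx] :
    exists2 v, v \in 'C_G[x] :\: 'Z(G) & ~~ ('C_G[v] \subset 'C_G[x]).
  apply/exists_inP; apply: contraR Cx_neq => /exists_inPn Cv_sub.
  have Cx_sub : 'C_G[x] \subset beta_set G x :|: 'Z(G).
    by apply: subcent1_sub_beta_center => // v /Cv_sub /negPn.
  rewrite eqEsubset Cx_sub subUset.
  rewrite (subset_trans (center_sub_center_subcent1 xG) (center_sub _)) andbT.
  by apply/subsetP=> y /setIdP[yG /eqP <-]; apply: subcent1_id.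
have vG := subsetP (subsetIl _ _) v vC.
have [|w w_max Cvw] := exists_cent_maximal (_ : v \in G :\: 'Z(G)).
  by rewrite inE vZ.
exists w; split=> //; last by apply: contraNneq Cvx => <-.
have /setDP[wG _] := w_max.1.
exact: subcent1C wG (subsetP Cvw x (subcent1C xG vC)).
Qed.

Lemma expn_center_quotient p :
    (forall x, cent_maximal x -> {in 'Z('C_G[x]), forall c, c ^+ p \in 'Z(G)}) ->
  {in G, forall g, g ^+ p \in 'Z(G)}.
Proof.
move=> expZ g gG; apply/negPn/negP => gpZ.
have gpGZ : g ^+ p \in G :\: 'Z(G) by rewrite in_setD gpZ groupX.
have gGZ : g \in G :\: 'Z(G).
  by rewrite in_setD gG andbT; apply: contra gpZ; apply: groupX.
have [w w_max Cgpw] := exists_cent_maximal gpGZ; have /setDP[wG _] := w_max.1.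
have [c cA] := cent_maximal_center_moves w_max gGZ; apply/negP; rewrite negbK.
have Cwc := sub_subcent1_center wG cA.
have Cgc := subset_trans (subcent1X G g p) (subset_trans Cgpw Cwc).
have /subcent1P[_ cg] := subsetP Cgc g (subcent1_id gG).
apply/eqP/subcent1_mul_eq => //; apply: subset_trans (subcent1X G _ p) _.
rewrite (expgMn _ (esym cg)) (subcent1_mulZ _ (expZ w w_max c cA)).
exact: subset_trans Cgpw Cwc.
Qed.

Section OddOrder.
Hypothesis oddG : odd #|G|.

Lemma cent_maximal_sqr_notin_center x w a :
    cent_maximal x -> cent_maximal w -> 'C_G[w] != 'C_G[x] ->
  a \in 'Z('C_G[x]) :\: 'Z(G) -> a ^+ 2 \notin 'Z('C_G[w]).
Proof.
move=> x_max w_max Cwx /setDP[aA aZ].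
have odd_a := dvdn_odd (order_dvdG (subsetP (center_subcent1_sub G x) a aA)) oddG.
have a2A : a ^+ 2 \in 'Z('C_G[x]) :\: 'Z(G) by rewrite in_setD !odd_order_sqr_mem ?aZ.
apply: contra Cwx => a2Aw; have Ca2w : 'C_G[a ^+ 2] = 'C_G[w].
  by apply: subcent1_cent_maximal; rewrite // in_setD a2Aw (setDP a2A).2.
by rewrite -Ca2w (subcent1_cent_maximal x_max a2A).
Qed.

Lemma cent_maximal_translates_disjoint x w a (T : {set gT}) :
    cent_maximal x -> cent_maximal w -> 'C_G[w] != 'C_G[x] ->
    a \in 'Z('C_G[x]) :\: 'Z(G) -> T \subset 'Z('C_G[w]) ->
  a *: T :&: a^-1 *: T = set0.
Proof.
move=> x_max w_max Cwx aA sTA.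
apply/setP=> u; rewrite inE in_set0; apply/andP=> [[/lcosetP[t1 t1T ->]]].
case/lcosetP=> t2 t2T e.
have a2E : a ^+ 2 = t2 * t1^-1.
  by rewrite -(mulKVg a t2) -e mulgA mulgK expgS expg1.
move: (cent_maximal_sqr_notin_center x_max w_max Cwx aA).
by rewrite a2E groupM ?groupV ?(subsetP sTA).
Qed.

Lemma expn_center_transfer x w a k :
    cent_maximal x -> cent_maximal w -> w \in 'C_G[x] -> 'C_G[w] != 'C_G[x] ->
    a \in 'Z('C_G[x]) :\: 'Z(G) -> a ^+ k \in 'Z(G) ->
  {in 'Z('C_G[w]), forall c, c ^+ k \in 'Z(G)}.
Proof.
move=> x_max w_max wCx Cwx aA akZ c0 c0A; apply/negPn/negP => c0kZ.
have /setDP[xG xZ] := x_max.1.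
have aG := subsetP (center_subcent1_sub G x) a (setDP aA).1.
have c0G := subsetP (center_subcent1_sub G w) c0 c0A.
set A := 'Z('C_G[w]); set P := [set c | c ^+ k \in 'Z(G)]; set T := A :\: P.
have AP_le_T : #|A :&: P| <= #|T| := card_expn_mem_le (center_abelian _) c0A c0kZ.
have CaT a' : a' \in 'Z('C_G[x]) :\: 'Z(G) -> a' ^+ k \in 'Z(G) ->
    {in T, forall t, 'C_G[a' * t] = 'C_G[x] :&: 'C_G[w]}.
  by move=> a'A a'kZ t /setDP[tA]; rewrite in_set; apply: subcent1_mul_centers.
have c0T : c0 \in T by rewrite in_setD in_set c0kZ.
have Cac0 := CaT a aA akZ c0 c0T.
have ac0GZ : a * c0 \in G :\: 'Z(G).
  rewrite in_setD (groupM aG c0G) andbT.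
  apply: contra xZ => ac0Z; rewrite -subcent1_eqG // eqEsubset subsetIl /=.
  by apply: subset_trans (subsetIl _ 'C_G[w]); rewrite -Cac0 subcent1_center.
have T_beta a' : a' \in 'Z('C_G[x]) :\: 'Z(G) -> a' ^+ k \in 'Z(G) ->
    a' *: T \subset beta_set G (a * c0).
  move=> a'A a'kZ; apply/subsetP=> u /lcosetP[t tT ->].
  have a'G := subsetP (center_subcent1_sub G x) a' (setDP a'A).1.
  have tG := subsetP (center_subcent1_sub G w) t (setDP tT).1.
  by rewrite inE groupM //= (CaT a') // Cac0.
have disjT := cent_maximal_translates_disjoint x_max w_max Cwx aA (subsetDl A P).
have aVA : a^-1 \in 'Z('C_G[x]) :\: 'Z(G) by rewrite in_setD !groupV -in_setD.
have : #|a *: T :|: a^-1 *: T| <= b.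
  rewrite -(card_beta ac0GZ) subset_leq_card // subUset.
  by rewrite (T_beta a) // (T_beta a^-1) // expgVn groupV.
rewrite cardsU disjT cards0 subn0 !card_lcoset => TT_le_b.
have card_A : #|A| = (#|'Z(G)| + b)%N.
  by rewrite card_center_cent_maximal // card_beta // w_max.1.
have Z_gt0 : 0 < #|'Z(G)| := cardG_gt0 _.
have : (#|'Z(G)| + b <= b)%N.
  by rewrite -card_A -(cardsID P A) (leq_trans _ TT_le_b) // leq_add2r.
by rewrite -{2}[b]add0n leq_add2r leqNgt Z_gt0.
Qed.

Lemma center_cent_maximal_expn x p : cent_maximal x ->
    'C_G[x] != beta_set G x :|: 'Z(G) -> prime p -> p %| #|'Z('C_G[x]) : 'Z(G)| ->
  {in 'Z('C_G[x]), forall c, c ^+ p \in 'Z(G)}.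
Proof.
move=> x_max Cx_neq p_pr p_dvd; have /setDP[xG _] := x_max.1.
have nZA := subset_trans (center_subcent1_sub G x) (normal_norm (center_normal G)).
have [a aA apZ] := Cauchy_index nZA p_pr p_dvd.
have [w [w_max wCx Cwx]] := cent_maximal_partner x_max Cx_neq.
have /setDP[wG wZ] := w_max.1.
have wA : w \in 'Z('C_G[w]) :\: 'Z(G).
  by rewrite in_setD wZ mem_center_subcent1 // wG subxx.
have wpZ := expn_center_transfer x_max w_max wCx Cwx aA apZ (setDP wA).1.
have Cxw : 'C_G[x] != 'C_G[w] by rewrite eq_sym.
exact: expn_center_transfer w_max x_max (subcent1C xG wCx) Cxw wA wpZ.
Qed.

End OddOrder.

End UniformBeta.

End MaximalCentralizers.

Theorem corollary3p7 (gT : finGroupType) (G : {group gT}) :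
  induced_regular G -> odd #|G| ->
  (forall x, x \in G -> 'C_G[x] != beta_set G x :|: 'Z(G)) ->
  exists p : nat, prime p /\ elementary_pgroup p (G / 'Z(G)).
Proof.
move=> /induced_regular_card_beta[b card_beta] oddG C_neq.
have [GZ | /subsetPn[v vG vZ]] := boolP (G \subset 'Z(G)).
  by exists 2; split=> // q; rewrite quotientS1 // => /set1P ->; rewrite eqxx.
have [|x0 x0_max _] := exists_cent_maximal (_ : v \in G :\: 'Z(G)).
  by rewrite in_setD vZ.
pose p := pdiv ((#|'Z(G)| + b) %/ #|'Z(G)|).
have p_pr : prime p.
  rewrite pdiv_prime // -(index_center_cent_maximal card_beta x0_max).
  exact: index_center_cent_maximal_gt1.
exists p; split=> //; apply: elementary_pgroup_quotient => //.
apply: (expn_center_quotient card_beta) => x x_max.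
have /setDP[xG _] := x_max.1.
have p_dvd : p %| #|'Z('C_G[x]) : 'Z(G)|.
  by rewrite (index_center_cent_maximal card_beta x_max) pdiv_dvd.
exact: (center_cent_maximal_expn card_beta oddG x_max (C_neq x xG) p_pr p_dvd).
Qed.
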